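(* Let $\mathrm{Cl}_{p,q}$ be a non-degenerate real Clifford algebra with generators $e_1,\dots,e_n$, $n=p+q$, with extended basis $\mathbf{B}$, multiplication table $\mathbf{M}$, diagonal scalar-product matrix $\mathbf{G}$, coefficient maps $C_S$ and canonical matrix map $\pi$ as defined below. Define $g$ as left multiplication by $\mathbf{G}$, $g(\mathbf{X})=\mathbf{G}\mathbf{X}$. Then for every fixed multi-index $S$ (i.e. $e_S\in\mathbf{B}$), \[ \pi(e_S)=C_S(g(\mathbf{M}))=g(C_S(\mathbf{M})), \] i.e. $\pi=C_S\circ g=g\circ C_S$ on $\mathbf{M}$. Furthermore, $\pi$ (extended linearly) is an isomorphism of $\mathrm{Cl}_{p,q}$ onto its image in $\mathbf{Mat}_{\mathbb{R}}(2^n\times 2^n)$, with inverse $\pi^{-1}$ on that image, thereby inducing a representation of $\mathrm{Cl}_{p,q}$ in the real matrix algebra $\mathbf{Mat}_{\mathbb{R}}(2^n\times 2^n)$.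
   Context: Generators satisfy $e_ie_j=-e_je_i$ ($i\ne j$) and $e_i^2=\sigma_i\in\{1,-1\}$. For $S=(s_1<\dots<s_m)\subseteq\{1,\dots,n\}$, $e_S=e_{s_1}\cdots e_{s_m}$, $e_\emptyset=1$. $\mathbf{B}$ is the list of all $2^n$ blades ordered by a fixed total order $\prec$ extending $e_i\prec e_j$ for $i<j$, with $1$ first. For blades, $e_Me_N=m_{MN}e_{M\triangle N}$ with $m_{MN}\in\{\pm1\}$; $\mathbf{M}=(e_Me_N)_{M,N}$ is the $2^n\times2^n$ multiplication table (entries in the algebra). $C_S$ acts entrywise on such arrays, sending $x\,e_U$ to $x$ if $U=S$ and to $0$ otherwise. $\mathbf{G}=\mathrm{diag}(\sigma_M)$ with $\sigma_M=\langle e_Me_M\rangle_0\in\{\pm1\}$. The canonical matrix map is $\pi(e_S)=\mathbf{E}_S:=\mathbf{G}\,C_S(\mathbf{M})$, extended linearly. *)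

From HB Require Import structures.
From mathcomp Require Import all_boot all_order all_algebra.
From mathcomp Require Import reals.
Set Implicit Arguments. Unset Strict Implicit. Unset Printing Implicit Defensive.
Import Order.TTheory GRing.Theory Num.Theory.
Local Open Scope ring_scope.

Section Clifford.
Variables (R : realType) (p q : nat).
Local Notation n := (p + q)%N.

(* e_i^2 = sigma_i : +1 for the first p generators, -1 for the last q. *)
Definition sigma (i : 'I_n) : R := if (i < p)%N then 1 else -1.

(* Elements of Cl_{p,q}: real coefficient vectors indexed by multi-indices
   S ⊆ {1..n} (here subsets of 'I_n); x S is the coefficient of e_S. *)
Local Notation Cl := {ffun {set 'I_n} -> R}.

Definition blade (S : {set 'I_n}) : Cl := [ffun T => (T == S)%:R].

Definition symdiff (M N : {set 'I_n}) : {set 'I_n} := (M :\: N) :|: (N :\: M).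

(* e_M e_N = m_MN e_{M Δ N}: reorder generators (one sign per inversion)
   and contract repeated generators using e_i^2 = sigma_i. *)
Definition msign (M N : {set 'I_n}) : R :=
  (-1) ^+ #|[set ij : 'I_n * 'I_n | [&& ij.1 \in M, ij.2 \in N & (ij.2 < ij.1)%N]]|
  * \prod_(i in M :&: N) sigma i.

Definition clmul (x y : Cl) : Cl :=
  [ffun T => \sum_(M : {set 'I_n}) \sum_(N : {set 'I_n} | symdiff M N == T)
               x M * y N * msign M N].

Definition coef (S : {set 'I_n}) (x : Cl) : R := x S.

Definition sigmaB (M : {set 'I_n}) : R := coef set0 (clmul (blade M) (blade M)).

(* An ordering of the blades: e i is the i-th blade of the list B. *)
Definition blade_order (e : 'I_(2 ^ n) -> {set 'I_n}) : Prop :=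
  [/\ bijective e,
      (forall k, (e k == set0) = (val k == 0%N)) &
      (forall (i j : 'I_n) (a b : 'I_(2 ^ n)),
          (i < j)%N -> e a = [set i] -> e b = [set j] -> (a < b)%N)].

Variable e : 'I_(2 ^ n) -> {set 'I_n}.

Definition Mtab : 'M[Cl]_(2 ^ n) := \matrix_(i, j) clmul (blade (e i)) (blade (e j)).

Definition CS (S : {set 'I_n}) (X : 'M[Cl]_(2 ^ n)) : 'M[R]_(2 ^ n) :=
  map_mx (coef S) X.

Definition Gmx : 'M[R]_(2 ^ n) := diag_mx (\row_i sigmaB (e i)).

Definition gCl (X : 'M[Cl]_(2 ^ n)) : 'M[Cl]_(2 ^ n) :=
  \matrix_(i, j) [ffun T => \sum_k Gmx i k * X k j T].
Definition gR (X : 'M[R]_(2 ^ n)) : 'M[R]_(2 ^ n) := Gmx *m X.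

Definition Emx (S : {set 'I_n}) : 'M[R]_(2 ^ n) := Gmx *m CS S Mtab.
Definition clrep (x : Cl) : 'M[R]_(2 ^ n) := \sum_(S : {set 'I_n}) x S *: Emx S.

End Clifford.

(* Writing m for the blade product sign, E_S has entries
   E_S(M, N) = sigma_M m_{MN} [M Δ N = S].  The identity E_M E_N = m_{MN} E_{M Δ N}
   then reduces to a cocycle identity for m, which holds factor by factor because
   m is a product of one sign per inversion and one sign sigma_i per contracted
   generator.  Hence pi is an algebra morphism; it is injective because the row of
   pi(x) indexed by the scalar blade is the coefficient vector of x. *)
From HB Require Import structures.
From mathcomp Require Import all_boot all_order all_algebra.
From mathcomp Require Import reals.
From mathcomp Require Import ring.
Set Implicit Arguments. Unset Strict Implicit. Unset Printing Implicit Defensive.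
Import Order.TTheory GRing.Theory Num.Theory.
Local Open Scope ring_scope.

Section SymmetricDifference.
Variables p q : nat.
Local Notation T := 'I_(p + q).

Lemma symdiffE (A B : {set T}) x : (x \in symdiff A B) = (x \in A) (+) (x \in B).
Proof. by rewrite !inE; case: (x \in A); case: (x \in B). Qed.

Lemma symdiffA : associative (@symdiff p q).
Proof. by move=> A B C; apply/setP => x; rewrite !symdiffE addbA. Qed.

Lemma symdiffKl (A : {set T}) : involutive (symdiff A).
Proof. by move=> B; apply/setP => x; rewrite !symdiffE addKb. Qed.

Lemma symdiffvv (A : {set T}) : symdiff A A = set0.
Proof. by apply/setP => x; rewrite symdiffE addbb inE. Qed.

Lemma symdiff0l (A : {set T}) : symdiff set0 A = A.
Proof. by apply/setP => x; rewrite symdiffE inE. Qed.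

Lemma symdiff0r (A : {set T}) : symdiff A set0 = A.
Proof. by apply/setP => x; rewrite symdiffE inE addbF. Qed.

Lemma eq_symdiffl (A B C : {set T}) : (symdiff A B == C) = (B == symdiff A C).
Proof. by apply/eqP/eqP => [<-|->]; rewrite symdiffKl. Qed.

End SymmetricDifference.

Section CliffordRepresentation.
Variables (R : realType) (p q : nat).
Local Notation n := (p + q)%N.
Local Notation Cl := {ffun {set 'I_n} -> R}.
Local Notation m := (@msign R p q).
Local Notation blade := (@blade R p q).

Definition inversion_sign (M N : {set 'I_n}) : R :=
  \prod_(ij : 'I_n * 'I_n)
     (if [&& ij.1 \in M, ij.2 \in N & (ij.2 < ij.1)%N] then -1 else 1).

Definition contraction_sign (M N : {set 'I_n}) : R :=
  \prod_(i : 'I_n) (if i \in M :&: N then @sigma R p q i else 1).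

Lemma msign_split M N : m M N = inversion_sign M N * contraction_sign M N.
Proof.
rewrite /msign /inversion_sign /contraction_sign -prodr_const big_mkcond.
congr (_ * _); first by apply: eq_bigr => ij _; rewrite inE.
by rewrite big_mkcond.
Qed.

Lemma msign_cocycle I J K :
  m J J * m I J * m J K = m (symdiff I J) (symdiff J K) * m I K.
Proof.
rewrite !msign_split.
have inv : inversion_sign J J * inversion_sign I J * inversion_sign J K =
           inversion_sign (symdiff I J) (symdiff J K) * inversion_sign I K.
  rewrite /inversion_sign -!big_split /=; apply: eq_bigr => -[x y] _ /=.
  rewrite !symdiffE.
  by case: (x \in I); case: (x \in J); case: (x \in K); case: (y \in J);
     case: (y \in K); case: (y < x)%N; rewrite /=; ring.
have ctr : contraction_sign J J * contraction_sign I J * contraction_sign J K =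
           contraction_sign (symdiff I J) (symdiff J K) * contraction_sign I K.
  rewrite /contraction_sign -!big_split /=; apply: eq_bigr => x _.
  rewrite !in_setI !symdiffE /sigma.
  by case: (x \in I); case: (x \in J); case: (x \in K); case: (x < p)%N;
     rewrite /=; ring.
by rewrite -[RHS]mulrACA -inv -ctr; ring.
Qed.

Lemma msign_sqr M N : m M N * m M N = 1.
Proof.
rewrite msign_split mulrACA /inversion_sign /contraction_sign -!big_split /=.
rewrite !big1 ?mulr1 // => x _; case: ifP => _; rewrite ?mulrNN ?mulr1 //.
by rewrite /sigma; case: ifP => _; rewrite ?mulrNN ?mulr1.
Qed.

Lemma msign0l N : m set0 N = 1.
Proof.
by rewrite msign_split /inversion_sign /contraction_sign !big1 ?mulr1 // => i _;
  rewrite !inE.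
Qed.

Lemma clmul_bladeE A B T :
  clmul (blade A) (blade B) T = if symdiff A B == T then m A B else 0.
Proof.
rewrite /clmul ffunE (bigD1 A) //= [X in _ + X]big1 ?addr0; last first.
  by move=> M /negbTE AM; apply: big1 => N _; rewrite !ffunE AM !mul0r.
rewrite big_mkcond (bigD1 B) //= [X in _ + X]big1 ?addr0; last first.
  by move=> N /negbTE BN; case: ifP => // _; rewrite !ffunE BN !mulr0 mul0r.
by rewrite !ffunE !eqxx !mul1r; case: ifP.
Qed.

Lemma sigmaB_msign M : @sigmaB R p q M = m M M.
Proof. by rewrite /sigmaB /coef clmul_bladeE symdiffvv eqxx. Qed.

Variable e : 'I_(2 ^ n) -> {set 'I_n}.
Local Notation E := (Emx R e).

Lemma CS_gCl_Mtab S : CS S (gCl e (Mtab R e)) = E S.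
Proof.
apply/matrixP => i j; rewrite !mxE /coef ffunE.
by apply: eq_bigr => k _; rewrite !mxE.
Qed.

Lemma Emx_entry S i j :
  E S i j = m (e i) (e i) * (if symdiff (e i) (e j) == S then m (e i) (e j) else 0).
Proof. by rewrite /Emx /Gmx mul_diag_mx !mxE /coef clmul_bladeE sigmaB_msign. Qed.

Lemma clrep_blade S : clrep e (blade S) = E S.
Proof.
rewrite /clrep (bigD1 S) //= big1 ?addr0 => [|T /negbTE ST].
  by rewrite ffunE eqxx scale1r.
by rewrite ffunE ST scale0r.
Qed.

Lemma clrep_linear (a : R) (x y : Cl) :
  clrep e [ffun T => a * x T + y T] = a *: clrep e x + clrep e y.
Proof.
rewrite /clrep scaler_sumr -big_split; apply: eq_bigr => S _.
by rewrite ffunE scalerDl scalerA.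
Qed.

Variable g : {set 'I_n} -> 'I_(2 ^ n).
Hypotheses (eK : cancel e g) (gK : cancel g e).

Lemma Emx_mul M N : E M *m E N = m M N *: E (symdiff M N).
Proof.
apply/matrixP => i k; rewrite mxE [RHS]mxE (bigD1 (g (symdiff (e i) M))) //=.
rewrite [X in _ + X]big1 ?addr0; last first.
  move=> j jN; rewrite Emx_entry eq_symdiffl.
  case: eqP => [ej|_]; last by rewrite mulr0 mul0r.
  by rewrite -ej eK eqxx in jN.
rewrite !Emx_entry gK; set I := e i; set J := symdiff I M; set K := e k.
have -> : M = symdiff I J by rewrite symdiffKl.
rewrite eqxx -symdiffA (can_eq (symdiffKl I)) -eq_symdiffl.
case: eqP => [<-|_]; last by rewrite !mulr0.
(* the cocycle identity, after cancelling the common factor sigma_I *)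
by rewrite [RHS]mulrCA -msign_cocycle; ring.
Qed.

Lemma clrep1 : clrep e (blade set0) = 1%:M.
Proof.
rewrite clrep_blade; apply/matrixP => i j.
rewrite Emx_entry !mxE eq_symdiffl symdiff0r (can_eq eK) eq_sym.
by case: eqP => [->|_]; rewrite ?mulr0 // msign_sqr.
Qed.

Lemma clrep_mul (x y : Cl) : clrep e (clmul x y) = clrep e x *m clrep e y.
Proof.
rewrite /clrep mulmx_suml.
under [RHS]eq_bigr do rewrite mulmx_sumr.
under [RHS]eq_bigr do under eq_bigr do
  rewrite -scalemxAl -scalemxAr scalerA Emx_mul scalerA.
rewrite (eq_bigr (fun S => \sum_M \sum_(N | symdiff M N == S)
                             (x M * y N * m M N) *: E S)); last first.
  by move=> S _; rewrite ffunE scaler_suml; apply: eq_bigr => M _; rewrite scaler_suml.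
rewrite exchange_big /=; apply: eq_bigr => M _.
rewrite (exchange_big_dep xpredT) //=; apply: eq_bigr => N _.
by rewrite (big_pred1 (symdiff M N)) // => T; rewrite /= eq_sym.
Qed.

Lemma clrep_scalar_row (x : Cl) k : clrep e x (g set0) k = x (e k).
Proof.
rewrite /clrep summxE.
under eq_bigr do rewrite mxE Emx_entry gK symdiff0l !msign0l mul1r.
rewrite (bigD1 (e k)) //= eqxx mulr1 big1 ?addr0 // => S /negbTE SNe.
by rewrite eq_sym SNe mulr0.
Qed.

Lemma clrep_inj : injective (clrep e : Cl -> _).
Proof. by move=> x y xy; apply/ffunP => S; rewrite -(gK S) -!clrep_scalar_row xy. Qed.

End CliffordRepresentation.

Theorem theorem2 (R : realType) (p q : nat)
    (e : 'I_(2 ^ (p + q)) -> {set 'I_(p + q)}) :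
  blade_order e ->
  (forall S : {set 'I_(p + q)},
      clrep e (blade R S) = CS S (gCl e (Mtab R e)) /\
      CS S (gCl e (Mtab R e)) = gR e (CS S (Mtab R e))) /\
  [/\ (forall (a : R) (x y : {ffun {set 'I_(p + q)} -> R}), clrep e [ffun T => a * x T + y T] = a *: clrep e x + clrep e y),
      clrep e (blade R set0) = 1%:M,
      (forall x y : {ffun {set 'I_(p + q)} -> R}, clrep e (clmul x y) = clrep e x *m clrep e y) &
      injective (@clrep R p q e)].
Proof.
case=> -[g eK gK] _ _; split.
  by move=> S; rewrite CS_gCl_Mtab clrep_blade.
split.
- exact: clrep_linear.
- exact: clrep1 eK.
- exact: clrep_mul eK gK.
- exact: clrep_inj gK.
Qed.
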